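(* Let $(G,\cdot,N,\star,\odot)$ be a left bracoid (a left skew bracoid with $(N,\star)$ abelian) and $(H,\circ)$ a group. Assume (a) $\boxdot$ is a transitive right action of $(H,\circ)$ on $N$ such that $g\odot(\eta\boxdot h)=(g\odot\eta)\boxdot h$ for all $g\in G$, $h\in H$, $\eta\in N$; and (b) ${}^{\alpha(g)}(\eta^{\beta(h)})=({}^{\alpha(g)}\eta)^{\beta(h)}$ for all $g\in G$, $h\in H$, $\eta\in N$. Then for all $\eta\in N$ and $h\in H$: (1) $\overline{\eta}^{\beta(h)}=\overline{\eta^{\beta(h)}}$; (2) $\overline{\eta}\boxdot h=(e_N\boxdot h)\star(e_N\boxdot h)\star\overline{(\eta\boxdot h)}$.
   Context: For a group $(N,\star)$, $e_N$ denotes its identity and $\overline{\eta}$ the inverse of $\eta$. A left skew bracoid is $(G,\cdot,N,\star,\odot)$ with $(G,\cdot),(N,\star)$ groups and $\odot$ a transitive left action of $G$ on $N$ with $g\odot(\mu\star\eta)=(g\odot\mu)\star\overline{(g\odot e_N)}\star(g\odot\eta)$ for all $g\in G$, $\mu,\eta\in N$. For $g\in G$, ${}^{\alpha(g)}\eta=\overline{(g\odot e_N)}\star(g\odot\eta)\star\overline{\eta}$. For $h\in H$, $\eta^{\beta(h)}=\overline{\eta}\star(\eta\boxdot h)\star\overline{(e_N\boxdot h)}$. *)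

Set Implicit Arguments.

Record group := Group {
  carrier :> Type;
  gmul : carrier -> carrier -> carrier;
  gone : carrier;
  ginv : carrier -> carrier;
  gmulA : forall x y z, gmul x (gmul y z) = gmul (gmul x y) z;
  gmul1l : forall x, gmul gone x = x;
  gmul1r : forall x, gmul x gone = x;
  gmulVl : forall x, gmul (ginv x) x = gone;
  gmulVr : forall x, gmul x (ginv x) = gone
}.
Arguments gmul {g} _ _.
Arguments gone {g}.
Arguments ginv {g} _.

Definition abelian (N : group) : Prop := forall x y : N, gmul x y = gmul y x.

Definition is_left_action {G : group} {X : Type} (act : G -> X -> X) : Prop :=
  (forall x, act (@gone G) x = x) /\
  (forall g g' x, act (gmul g g') x = act g (act g' x)).

Definition is_right_action {H : group} {X : Type} (act : X -> H -> X) : Prop :=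
  (forall x, act x (@gone H) = x) /\
  (forall x h h', act x (gmul h h') = act (act x h) h').

Definition left_transitive {G : group} {X : Type} (act : G -> X -> X) : Prop :=
  forall x y : X, exists g, act g x = y.

Definition right_transitive {H : group} {X : Type} (act : X -> H -> X) : Prop :=
  forall x y : X, exists h, act x h = y.

Definition left_skew_bracoid {G N : group} (odot : G -> N -> N) : Prop :=
  is_left_action odot /\ left_transitive odot /\
  forall (g : G) (mu eta : N),
    odot g (gmul mu eta) =
    gmul (gmul (odot g mu) (ginv (odot g (@gone N)))) (odot g eta).

Definition left_bracoid {G N : group} (odot : G -> N -> N) : Prop :=
  left_skew_bracoid odot /\ abelian N.

Definition alpha {G N : group} (odot : G -> N -> N) (g : G) (eta : N) : N :=
  gmul (gmul (ginv (odot g (@gone N))) (odot g eta)) (ginv eta).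

Definition beta {H N : group} (boxdot : N -> H -> N) (h : H) (eta : N) : N :=
  gmul (gmul (ginv eta) (boxdot eta h)) (ginv (boxdot (@gone N) h)).

(* For a fixed g, the map gamma_g(eta) = bar(g odot e_N) * (g odot eta) is a
   homomorphism of N, and alpha(g) is eta |-> gamma_g(eta) * bar(eta).  The
   compatibility of odot with boxdot gives
   (g odot eta)^beta(h) = gamma_g(eta^beta(h)) * gamma_g(e_N boxdot h) * bar(e_N boxdot h),
   while gamma_g(e_N boxdot h) = x^beta(h) * (e_N boxdot h) for x = g odot e_N.
   Applying (b) to bar(x), for which alpha(g) bar(x) = g odot bar(x) since N is
   abelian, and cancelling gamma_g(bar(x)^beta(h)) leaves bar(x)^beta(h) = bar(x^beta(h)).
   Every eta is such an x by transitivity of odot, which is (1); (2) is (1) with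
   beta unfolded. *)

Section GroupFacts.
Context {N : group}.
Implicit Types x y z : N.

Lemma mulKg x y : gmul (ginv x) (gmul x y) = y.
Proof. now rewrite gmulA, gmulVl, gmul1l. Qed.

Lemma mulKVg x y : gmul x (gmul (ginv x) y) = y.
Proof. now rewrite gmulA, gmulVr, gmul1l. Qed.

Lemma mulgK x y : gmul (gmul y x) (ginv x) = y.
Proof. now rewrite <- gmulA, gmulVr, gmul1r. Qed.

Lemma mulgKV x y : gmul (gmul y (ginv x)) x = y.
Proof. now rewrite <- gmulA, gmulVl, gmul1r. Qed.

Lemma mulgI x y z : gmul x y = gmul x z -> y = z.
Proof. intro E. now rewrite <- (mulKg x y), E, mulKg. Qed.

Lemma invgK x : ginv (ginv x) = x.
Proof. apply (mulgI (ginv x)). now rewrite gmulVr, gmulVl. Qed.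

Lemma invMg x y : ginv (gmul x y) = gmul (ginv y) (ginv x).
Proof.
  apply (mulgI (gmul x y)).
  now rewrite gmulVr, <- gmulA, mulKVg, gmulVr.
Qed.

End GroupFacts.

Definition gamma {G N : group} (odot : G -> N -> N) (g : G) (eta : N) : N :=
  gmul (ginv (odot g (@gone N))) (odot g eta).

Lemma alphaE (G N : group) (odot : G -> N -> N) (g : G) (eta : N) :
  alpha odot g eta = gmul (gamma odot g eta) (ginv eta).
Proof. reflexivity. Qed.

Section BracoidAtPoint.
Variables (G N H : group) (odot : G -> N -> N) (boxdot : N -> H -> N).
Variables (g : G) (h : H).
Hypothesis odot_mul : forall mu eta : N,
  odot g (gmul mu eta) = gmul (gmul (odot g mu) (ginv (odot g gone))) (odot g eta).
Hypothesis odot_boxdot : forall eta : N, odot g (boxdot eta h) = boxdot (odot g eta) h.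

Local Notation x := (odot g (@gone N)).
Local Notation c := (boxdot (@gone N) h).
Local Notation gam := (gamma odot g).
Local Notation bet := (beta boxdot h).

Lemma gamma_mul mu eta : gam (gmul mu eta) = gmul (gam mu) (gam eta).
Proof. unfold gamma. now rewrite odot_mul, !gmulA. Qed.

Lemma odot_invl_mul y z : gmul (ginv (odot g y)) (odot g z) = gam (gmul (ginv y) z).
Proof.
  apply (mulgI (gam y)).
  rewrite <- gamma_mul, mulKVg.
  unfold gamma. now rewrite <- (gmulA _ (ginv x)), mulKVg.
Qed.

Lemma beta_odot y : bet (odot g y) = gmul (gmul (gam (bet y)) (gam c)) (ginv c).
Proof.
  unfold beta at 1. rewrite <- odot_boxdot, odot_invl_mul, <- gamma_mul.
  unfold beta. now rewrite mulgKV.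
Qed.

Lemma gamma_boxdot_one : gam c = gmul (bet x) c.
Proof. unfold gamma, beta. now rewrite odot_boxdot, mulgKV. Qed.

Lemma alpha_inv_odot_one : abelian N -> alpha odot g (ginv x) = odot g (ginv x).
Proof. intro Nab. rewrite alphaE, invgK, Nab. apply mulKVg. Qed.

Lemma beta_inv_odot_one :
  abelian N ->
  alpha odot g (bet (ginv x)) = bet (alpha odot g (ginv x)) ->
  bet (ginv x) = ginv (bet x).
Proof.
  intros Nab E.
  rewrite alpha_inv_odot_one, beta_odot, gamma_boxdot_one, alphaE in E by exact Nab.
  rewrite <- (gmulA _ (gam _)), mulgK in E.
  apply mulgI in E.
  now rewrite <- E, invgK.
Qed.

End BracoidAtPoint.

Lemma boxdot_inv_of_beta_inv (N H : group) (boxdot : N -> H -> N) (h : H) (eta : N) :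
  abelian N ->
  beta boxdot h (ginv eta) = ginv (beta boxdot h eta) ->
  boxdot (ginv eta) h =
    gmul (gmul (boxdot gone h) (boxdot gone h)) (ginv (boxdot eta h)).
Proof.
  intros Nab E. unfold beta in E.
  rewrite !invMg, !invgK in E.
  apply (mulgI eta).
  rewrite <- (mulgKV (boxdot gone h) (gmul eta _)), E.
  rewrite (Nab _ (boxdot gone h)), (gmulA _ (boxdot gone h)), (gmulA _ (gmul _ _)).
  apply Nab.
Qed.

Theorem proposition3p5 (G N H : group) (odot : G -> N -> N) (boxdot : N -> H -> N)
  (hbr : left_bracoid odot)
  (hact : is_right_action boxdot) (htr : right_transitive boxdot)
  (hcomm : forall (g : G) (h : H) (eta : N),
      odot g (boxdot eta h) = boxdot (odot g eta) h)
  (hab : forall (g : G) (h : H) (eta : N),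
      alpha odot g (beta boxdot h eta) = beta boxdot h (alpha odot g eta)) :
  forall (eta : N) (h : H),
    beta boxdot h (ginv eta) = ginv (beta boxdot h eta) /\
    boxdot (ginv eta) h =
      gmul (gmul (boxdot (@gone N) h) (boxdot (@gone N) h)) (ginv (boxdot eta h)).
Proof.
  intros eta h.
  destruct hbr as [[_ [odot_transitive odot_mul]] Nab].
  destruct (odot_transitive gone eta) as [g <-].
  assert (beta_inv : beta boxdot h (ginv (odot g gone)) = ginv (beta boxdot h (odot g gone))).
  { apply beta_inv_odot_one; [apply odot_mul | apply hcomm | exact Nab | apply hab]. }
  split; [exact beta_inv | now apply boxdot_inv_of_beta_inv].
Qed.
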